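(* Let $\alpha_1,\beta_1\in\mathbb R$, $\mu_1\in\mathbb C$, and consider the equation $$ i\partial_t\phi+|\phi|^2\partial_{xx}\phi+\alpha_1\phi|\partial_x\phi|^2+\beta_1\overline{\phi}(\partial_x\phi)^2+\mu_1|\phi|^2\phi=0. \qquad (\ast)$$ Let $0<x_1<1$, $\delta>0$, and let $f\in L^\infty([0,\delta];C^{3,1}([-x_1,x_1]))$ be a solution of $(\ast)$ with $f_0=f(0,\cdot)$ satisfying $f_0(0)=0$ and $f_x(0,0)>0$ real, and assume $x_1$ is small enough that $$\Big(\sup_{x\in[-x_1,x_1]}|f_{xx}(0,x)|\Big)\,x_1<\frac{f_x(0,0)}{2}.$$ Set $M=\|f\|_{L^\infty([0,\delta];C^{3,1})}$. Then there is a constant $C>0$ (independent of $f$, $t$, $x$) such that for all $t\in[0,\delta]$ and $|x|\le x_1$, $$|f(t,x)|\le|f_0(x)|\exp(CM^2t)$$ and $$\big|\partial_t(|f(t,x)|^2)\big|\le CM\exp(CM^2\delta)\big(1+(f_x(0,0))^{-1}M\big)^3\big(|f_0(x)|^3+tM^3|f_0(x)|^2\big).$$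
   Context: $C^{3,1}([-x_1,x_1])$ denotes functions on $[-x_1,x_1]$ with Lipschitz third derivative. *)

From Stdlib Require Import Reals.
From Coquelicot Require Import Coquelicot.
Open Scope R_scope.

Definition has_deriv_within {V : NormedModule R_AbsRing}
  (a b : R) (g : R -> V) (x : R) (l : V) : Prop :=
  filterlim (fun y => scal (/ (y - x)) (minus (g y) (g x)))
    (within (fun y => a <= y <= b /\ y <> x) (locally x)) (locally l).

Definition NL (a1 b1 : R) (m1 : C) (phi phix phixx : C) : C :=
  (RtoC (Cmod phi ^ 2) * phixx
   + RtoC a1 * phi * RtoC (Cmod phix ^ 2)
   + RtoC b1 * Cconj phi * (phix * phix)
   + m1 * RtoC (Cmod phi ^ 2) * phi)%C.

From Stdlib Require Import Reals Lra Psatz.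
From Coquelicot Require Import Coquelicot.
Open Scope R_scope.

(* Writing ( * ) as [f_t = i N(f)], one gets
   [d_t |f|^2 = -2 (|f|^2 Im (conj f f_xx) + 2 beta1 Re (conj f f_x) Im (conj f f_x)
                    + Im mu1 |f|^4)],
   the [alpha1]-term being parallel to [f].  Hence [|d_t |f|^2| <= C M^2 |f|^2] and
   Gronwall gives the first estimate; in particular [f(t,0) = 0] for all [t].
   By Taylor's formula [f - x f_x = O(M x^2)], so
   [Im (conj f f_x) = Im (conj (f - x f_x) f_x) = O(M^2 x^2)], while the smallness of
   [f_xx(0,.)] gives [|f_0(x)| >= f_x(0,0) |x| / 2], i.e. [x^2 <= 4 |f_0(x)|^2 / f_x(0,0)^2].
   Inserting both bounds in the formula for [d_t |f|^2] gives the second estimate. *)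

(** * One-sided derivatives on a closed interval *)

Definition is_derive_within (a b : R) (g : R -> R) (x l : R) : Prop :=
  forall eps, 0 < eps -> exists d, 0 < d /\ forall y, a <= y <= b -> y <> x ->
    Rabs (y - x) < d -> Rabs ((g y - g x) / (y - x) - l) < eps.

Lemma is_derive_within_components a b (g : R -> C) x l :
  has_deriv_within a b g x l ->
  is_derive_within a b (fun y => fst (g y)) x (fst l) /\
  is_derive_within a b (fun y => snd (g y)) x (snd l).
Proof.
  intros H; split; intros eps Heps;
    destruct (H (ball l (mkposreal eps Heps)) (locally_ball _ _)) as [[d Hd] Hball];
    exists d; split; auto; intros y Hy Hyx Hyd;
    destruct (Hball y Hyd (conj Hy Hyx)) as [H1 H2];
    [revert H1 | revert H2];
    destruct (g y), (g x), l;
    cbv [ball AbsRing_ball abs minus plus opp mult scal]; simpl;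
    cbv [mult]; simpl; rewrite Rmult_comm; auto.
Qed.

Lemma has_deriv_within_of_is_derive_within a b g x l :
  is_derive_within a b g x l -> @has_deriv_within R_NormedModule a b g x l.
Proof.
  intros H P [[eps Heps] HP].
  destruct (H eps Heps) as [d [Hd Hy]].
  exists (mkposreal d Hd); intros y Hyd [Hyab Hyx]. apply HP.
  cbv [ball AbsRing_ball abs minus plus opp mult scal]; simpl; cbv [mult]; simpl.
  rewrite Rmult_comm. apply Hy; auto.
Qed.

Lemma is_derive_within_ext a b g h x l :
  (forall y, g y = h y) -> is_derive_within a b g x l -> is_derive_within a b h x l.
Proof.
  intros E H eps Heps. destruct (H eps Heps) as [d [Hd Hy]].
  exists d; split; auto. intros y. rewrite <- !E. auto.
Qed.

Lemma is_derive_within_continuous a b g x l : is_derive_within a b g x l ->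
  forall eps, 0 < eps -> exists d, 0 < d /\
    forall y, a <= y <= b -> Rabs (y - x) < d -> Rabs (g y - g x) < eps.
Proof.
  intros H eps Heps. destruct (H 1 Rlt_0_1) as [d [Hd Hy]].
  assert (HL : 0 < Rabs l + 1) by (generalize (Rabs_pos l); lra).
  exists (Rmin d (eps / (Rabs l + 1))). split.
  { apply Rmin_pos; auto. apply Rdiv_lt_0_compat; auto. }
  intros y Hyab Hyd. destruct (Req_dec y x) as [->|Hyx].
  { rewrite Rminus_diag, Rabs_R0. auto. }
  assert (Hq := Hy y Hyab Hyx (Rlt_le_trans _ _ _ Hyd (Rmin_l _ _))).
  assert (Hyd' := Rlt_le_trans _ _ _ Hyd (Rmin_r _ _)).
  assert (Hq' : Rabs ((g y - g x) / (y - x)) <= Rabs l + 1).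
  { replace ((g y - g x) / (y - x)) with ((g y - g x) / (y - x) - l + l) by ring.
    eapply Rle_trans; [apply Rabs_triang|]. lra. }
  replace (g y - g x) with ((g y - g x) / (y - x) * (y - x)) by (field; lra).
  rewrite Rabs_mult.
  apply Rle_lt_trans with ((Rabs l + 1) * Rabs (y - x)).
  { apply Rmult_le_compat_r; auto. apply Rabs_pos. }
  apply (Rmult_lt_compat_l (Rabs l + 1)) in Hyd'; auto.
  replace ((Rabs l + 1) * (eps / (Rabs l + 1))) with eps in Hyd' by (field; lra).
  exact Hyd'.
Qed.

Lemma is_derive_within_plus a b g h x l m :
  is_derive_within a b g x l -> is_derive_within a b h x m ->
  is_derive_within a b (fun y => g y + h y) x (l + m).
Proof.
  intros Hg Hh eps Heps.
  destruct (Hg (eps / 2)) as [d1 [Hd1 H1]]; [lra|].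
  destruct (Hh (eps / 2)) as [d2 [Hd2 H2]]; [lra|].
  exists (Rmin d1 d2); split; [apply Rmin_pos; auto|].
  intros y Hy Hyx Hyd.
  assert (A1 := H1 y Hy Hyx (Rlt_le_trans _ _ _ Hyd (Rmin_l _ _))).
  assert (A2 := H2 y Hy Hyx (Rlt_le_trans _ _ _ Hyd (Rmin_r _ _))).
  replace ((g y + h y - (g x + h x)) / (y - x) - (l + m)) with
    (((g y - g x) / (y - x) - l) + ((h y - h x) / (y - x) - m)) by (field; lra).
  eapply Rle_lt_trans; [apply Rabs_triang|]. lra.
Qed.

Lemma is_derive_within_mult a b g h x l m :
  is_derive_within a b g x l -> is_derive_within a b h x m ->
  is_derive_within a b (fun y => g y * h y) x (l * h x + g x * m).
Proof.
  intros Hg Hh eps Heps.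
  set (B := Rabs l + Rabs (h x) + Rabs (g x) + 1).
  assert (HB : 0 < B) by (unfold B; generalize (Rabs_pos l) (Rabs_pos (h x)) (Rabs_pos (g x)); lra).
  set (e := Rmin 1 (eps / (4 * B))).
  assert (He : 0 < e) by (apply Rmin_pos; [lra | apply Rdiv_lt_0_compat; lra]).
  assert (HeB : e * B <= eps / 4).
  { apply Rle_trans with (eps / (4 * B) * B).
    - apply Rmult_le_compat_r; [lra | apply Rmin_r].
    - right; field; lra. }
  destruct (Hg e He) as [d1 [Hd1 H1]].
  destruct (is_derive_within_continuous _ _ _ _ _ Hh e He) as [d2 [Hd2 H2]].
  destruct (Hh e He) as [d3 [Hd3 H3]].
  exists (Rmin d1 (Rmin d2 d3)); split; [repeat apply Rmin_pos; auto|].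
  intros y Hy Hyx Hyd.
  assert (Hyd23 := Rlt_le_trans _ _ _ Hyd (Rmin_r _ _)).
  assert (E1 := H1 y Hy Hyx (Rlt_le_trans _ _ _ Hyd (Rmin_l _ _))).
  assert (E2 := H2 y Hy (Rlt_le_trans _ _ _ Hyd23 (Rmin_l _ _))).
  assert (E3 := H3 y Hy Hyx (Rlt_le_trans _ _ _ Hyd23 (Rmin_r _ _))).
  assert (He1 : e <= 1) by apply Rmin_l.
  assert (Hhy : Rabs (h y) <= B).
  { replace (h y) with (h x + (h y - h x)) by ring.
    eapply Rle_trans; [apply Rabs_triang|].
    unfold B; generalize (Rabs_pos l) (Rabs_pos (g x)); lra. }
  replace ((g y * h y - g x * h x) / (y - x) - (l * h x + g x * m)) with
    (((g y - g x) / (y - x) - l) * h y + l * (h y - h x)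
     + g x * ((h y - h x) / (y - x) - m)) by (field; lra).
  assert (T1 : Rabs (((g y - g x) / (y - x) - l) * h y) <= e * B).
  { rewrite Rabs_mult. apply Rmult_le_compat; auto using Rabs_pos; lra. }
  assert (T2 : Rabs (l * (h y - h x)) <= B * e).
  { rewrite Rabs_mult. apply Rmult_le_compat; auto using Rabs_pos; [|lra].
    unfold B; generalize (Rabs_pos (h x)) (Rabs_pos (g x)); lra. }
  assert (T3 : Rabs (g x * ((h y - h x) / (y - x) - m)) <= B * e).
  { rewrite Rabs_mult. apply Rmult_le_compat; auto using Rabs_pos; [|lra].
    unfold B; generalize (Rabs_pos l) (Rabs_pos (h x)); lra. }
  assert (T := Rabs_triang (((g y - g x) / (y - x) - l) * h y) (l * (h y - h x))).
  eapply Rle_lt_trans; [apply Rabs_triang|].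
  assert (HBe : B * e = e * B) by ring.
  lra.
Qed.

Lemma is_derive_within_of_derivable_pt_lim a b g x l :
  derivable_pt_lim g x l -> is_derive_within a b g x l.
Proof.
  intros H eps Heps. destruct (H eps Heps) as [[d Hd] Hh].
  exists d; split; auto. intros y _ Hyx Hyd.
  assert (Hq := Hh (y - x) ltac:(lra) Hyd). simpl in Hq.
  replace (x + (y - x)) with y in Hq by ring. exact Hq.
Qed.

Lemma derivable_pt_lim_of_is_derive_within a b g x l :
  a < x < b -> is_derive_within a b g x l -> derivable_pt_lim g x l.
Proof.
  intros Hx H eps Heps. destruct (H eps Heps) as [d [Hd Hy]].
  assert (Hd' : 0 < Rmin d (Rmin (x - a) (b - x))) by (repeat apply Rmin_pos; lra).
  exists (mkposreal _ Hd'). intros k Hk Hkd. simpl in Hkd.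
  assert (H1 := Rmin_l d (Rmin (x - a) (b - x))).
  assert (H2 := Rmin_r d (Rmin (x - a) (b - x))).
  assert (H3 := Rmin_l (x - a) (b - x)). assert (H4 := Rmin_r (x - a) (b - x)).
  destruct (Rabs_def2 _ _ Hkd).
  replace k with (x + k - x) at 2 by ring.
  apply Hy; [lra | lra | replace (x + k - x) with k by ring; lra].
Qed.

Definition clamp (u v y : R) : R := Rmax u (Rmin v y).

Lemma clamp_in u v y : u <= v -> u <= clamp u v y <= v.
Proof. unfold clamp, Rmax, Rmin; intros; repeat destruct Rle_dec; lra. Qed.

Lemma clamp_id u v y : u <= y <= v -> clamp u v y = y.
Proof. unfold clamp, Rmax, Rmin; intros; repeat destruct Rle_dec; lra. Qed.

Lemma clamp_dist u v y c : u <= c <= v -> Rabs (clamp u v y - c) <= Rabs (y - c).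
Proof.
  unfold clamp, Rmax, Rmin, Rabs; intros;
    repeat (destruct Rle_dec || destruct Rcase_abs); lra.
Qed.

(* Clamping extends [g] constantly outside [[Rmin u v, Rmax u v]], which turns
   the one-sided continuity at the endpoints into the two-sided one that
   [MVT_gen] asks for. *)
Lemma is_derive_within_MVT a b g g' u v :
  a <= u <= b -> a <= v <= b ->
  (forall y, Rmin u v <= y <= Rmax u v -> is_derive_within a b g y (g' y)) ->
  exists c, Rmin u v <= c <= Rmax u v /\ g v - g u = g' c * (v - u).
Proof.
  intros Hu Hv Hd.
  assert (Hu' : Rmin u v <= u <= Rmax u v) by (split; [apply Rmin_l | apply Rmax_l]).
  assert (Hv' : Rmin u v <= v <= Rmax u v) by (split; [apply Rmin_r | apply Rmax_r]).
  assert (a <= Rmin u v) by (apply Rmin_glb; lra).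
  assert (Rmax u v <= b) by (apply Rmax_lub; lra).
  set (G := fun y => g (clamp (Rmin u v) (Rmax u v) y)).
  destruct (MVT_gen G u v g') as [c [Hc HG]].
  - intros x Hx. apply is_derive_ext_loc with g.
    + assert (He : 0 < Rmin (x - Rmin u v) (Rmax u v - x)) by (apply Rmin_pos; lra).
      exists (mkposreal _ He). intros y Hy.
      unfold ball in Hy; simpl in Hy.
      unfold AbsRing_ball, abs, minus, plus, opp in Hy; simpl in Hy.
      destruct (Rabs_def2 _ _ Hy).
      assert (Hm1 := Rmin_l (x - Rmin u v) (Rmax u v - x)).
      assert (Hm2 := Rmin_r (x - Rmin u v) (Rmax u v - x)).
      unfold G. rewrite clamp_id; [reflexivity | lra].
    + apply is_derive_Reals, (derivable_pt_lim_of_is_derive_within a b);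
        [|apply Hd]; lra.
  - intros x Hx eps Heps.
    destruct (is_derive_within_continuous _ _ _ _ _ (Hd x Hx) eps Heps)
      as [d [Hd0 Hy]].
    exists d; split; auto. intros y [_ Hyd]. simpl in *. unfold R_dist in *.
    unfold G. rewrite (clamp_id _ _ x Hx).
    assert (Hcl := clamp_in (Rmin u v) (Rmax u v) y ltac:(lra)).
    apply Hy; [lra|].
    eapply Rle_lt_trans; [apply clamp_dist; auto | exact Hyd].
  - exists c; split; auto.
    unfold G in HG. rewrite !clamp_id in HG by auto. exact HG.
Qed.

Lemma is_derive_within_increment_le a b g g' u v K :
  a <= u -> u <= v -> v <= b ->
  (forall y, u <= y <= v -> is_derive_within a b g y (g' y)) ->
  (forall y, u <= y <= v -> g' y <= K) -> g v - g u <= K * (v - u).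
Proof.
  intros Hau Huv Hvb Hd HK.
  destruct (is_derive_within_MVT a b g g' u v) as [c [Hc ->]]; try lra.
  - rewrite Rmin_left, Rmax_right by lra. exact Hd.
  - rewrite Rmin_left, Rmax_right in Hc by lra.
    apply Rmult_le_compat_r; [lra | auto].
Qed.

Lemma is_derive_within_increment_ge a b g g' u v K :
  a <= u -> u <= v -> v <= b ->
  (forall y, u <= y <= v -> is_derive_within a b g y (g' y)) ->
  (forall y, u <= y <= v -> K <= g' y) -> K * (v - u) <= g v - g u.
Proof.
  intros Hau Huv Hvb Hd HK.
  destruct (is_derive_within_MVT a b g g' u v) as [c [Hc ->]]; try lra.
  - rewrite Rmin_left, Rmax_right by lra. exact Hd.
  - rewrite Rmin_left, Rmax_right in Hc by lra.
    apply Rmult_le_compat_r; [lra | auto].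
Qed.

Lemma is_derive_within_Lipschitz a b g g' u v B :
  a <= u <= b -> a <= v <= b ->
  (forall y, Rmin u v <= y <= Rmax u v -> is_derive_within a b g y (g' y)) ->
  (forall y, Rmin u v <= y <= Rmax u v -> Rabs (g' y) <= B) ->
  Rabs (g v - g u) <= B * Rabs (v - u).
Proof.
  intros Hu Hv Hd HB.
  destruct (is_derive_within_MVT a b g g' u v Hu Hv Hd) as [c [Hc ->]].
  rewrite Rabs_mult. apply Rmult_le_compat_r; [apply Rabs_pos | auto].
Qed.

Lemma gronwall_exp d h h' c : 0 <= d ->
  (forall s, 0 <= s <= d -> is_derive_within 0 d h s (h' s)) ->
  (forall s, 0 <= s <= d -> h' s <= c * h s) ->
  forall t, 0 <= t <= d -> h t <= h 0 * exp (c * t).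
Proof.
  intros Hd Hh Hh' t Ht.
  assert (Hexp : forall s, derivable_pt_lim (fun s => exp (- c * s)) s (- c * exp (- c * s)))
    by (intros s; apply is_derive_Reals; auto_derive; auto; ring).
  assert (Hdecr : h t * exp (- c * t) - h 0 * exp (- c * 0) <= 0 * (t - 0)).
  { apply (is_derive_within_increment_le 0 d (fun s => h s * exp (- c * s))
      (fun s => h' s * exp (- c * s) + h s * (- c * exp (- c * s)))); try lra.
    - intros s Hs. apply (is_derive_within_mult 0 d h (fun s => exp (- c * s)));
        [apply Hh; lra | apply is_derive_within_of_derivable_pt_lim, Hexp].
    - intros s Hs. assert (E := exp_pos (- c * s)). assert (L := Hh' s ltac:(lra)). nra. }
  rewrite Rmult_0_r, exp_0, Rmult_1_r, Rmult_0_l in Hdecr.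
  replace (h t) with (h t * exp (- c * t) * exp (c * t)).
  - apply Rmult_le_compat_r; [apply Rlt_le, exp_pos | lra].
  - rewrite Rmult_assoc, <- exp_plus. replace (- c * t + c * t) with 0 by ring.
    rewrite exp_0; ring.
Qed.

Lemma Taylor_first_order_remainder a b P P1 P2 M x0 x :
  a <= x0 <= b -> a <= x <= b ->
  (forall y, a <= y <= b ->
     is_derive_within a b P y (P1 y) /\ is_derive_within a b P1 y (P2 y)) ->
  (forall y, a <= y <= b -> Rabs (P2 y) <= M) ->
  Rabs (P x - P x0 - (x - x0) * P1 x) <= M * (x - x0) ^ 2.
Proof.
  intros Hx0 Hx HP HM.
  assert (Hbetween : forall y, Rmin x0 x <= y <= Rmax x0 x ->
            a <= y <= b /\ Rabs (y - x0) <= Rabs (x - x0)).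
  { intros y Hy. split.
    - assert (Rmin x0 x >= a) by (apply Rle_ge, Rmin_glb; lra).
      assert (Rmax x0 x <= b) by (apply Rmax_lub; lra). lra.
    - apply Rabs_le_between_min_max; rewrite Rmin_comm, Rmax_comm; exact Hy. }
  (* [y |-> P y + (x0 - y) P1 y] has derivative [(x0 - y) P2 y]. *)
  assert (Hrem := is_derive_within_Lipschitz a b (fun y => P y + (x0 - y) * P1 y)
    (fun y => P1 y + (-1 * P1 y + (x0 - y) * P2 y)) x0 x (M * Rabs (x - x0)) Hx0 Hx).
  simpl in Hrem.
  replace (P x - P x0 - (x - x0) * P1 x)
    with (P x + (x0 - x) * P1 x - (P x0 + (x0 - x0) * P1 x0)) by ring.
  replace (M * (x - x0) ^ 2) with (M * Rabs (x - x0) * Rabs (x - x0))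
    by (rewrite <- pow2_abs; ring).
  apply Hrem.
  - intros y Hy. destruct (Hbetween y Hy) as [Hy' _].
    apply is_derive_within_plus; [apply HP; auto|].
    apply is_derive_within_mult; [|apply HP; auto].
    apply is_derive_within_of_derivable_pt_lim, is_derive_Reals.
    auto_derive; auto; ring.
  - intros y Hy. destruct (Hbetween y Hy) as [Hy' Hyx].
    replace (P1 y + (-1 * P1 y + (x0 - y) * P2 y)) with (- ((y - x0) * P2 y)) by ring.
    rewrite Rabs_Ropp, Rabs_mult, Rmult_comm.
    apply Rmult_le_compat; auto using Rabs_pos.
Qed.

Lemma lower_bound_near_simple_zero r P P1 P2 S x :
  (forall y, -r <= y <= r ->
     is_derive_within (-r) r P y (P1 y) /\ is_derive_within (-r) r P1 y (P2 y)) ->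
  (forall y, -r <= y <= r -> Rabs (P2 y) <= S) ->
  P 0 = 0 -> S * r < P1 0 / 2 -> -r <= x <= r ->
  P1 0 * Rabs x / 2 <= Rabs (P x).
Proof.
  intros HP HS HP0 Hsmall Hx.
  assert (HS0 : 0 <= S) by (eapply Rle_trans; [apply Rabs_pos | apply (HS 0); lra]).
  assert (HP1 : forall y, -r <= y <= r -> P1 0 / 2 <= P1 y).
  { intros y Hy.
    assert (Hy0 : Rabs (y - 0) <= r) by (rewrite Rminus_0_r; apply Rabs_le; lra).
    assert (Hbetween : forall z, Rmin 0 y <= z <= Rmax 0 y -> -r <= z <= r).
    { intros z Hz. assert (Rmin 0 y >= -r) by (apply Rle_ge, Rmin_glb; lra).
      assert (Rmax 0 y <= r) by (apply Rmax_lub; lra). lra. }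
    assert (Hlip := is_derive_within_Lipschitz (-r) r P1 P2 0 y S ltac:(lra) Hy
      (fun z Hz => proj2 (HP z (Hbetween z Hz))) (fun z Hz => HS z (Hbetween z Hz))).
    apply Rabs_le_between' in Hlip.
    assert (S * Rabs (y - 0) <= S * r) by (apply Rmult_le_compat_l; auto).
    lra. }
  assert (Ha : 0 < P1 0) by (assert (0 <= S * r) by (apply Rmult_le_pos; lra); lra).
  destruct (Rle_dec 0 x) as [Hx0 | Hx0].
  - assert (Hincr := is_derive_within_increment_ge (-r) r P P1 0 x (P1 0 / 2)
      ltac:(lra) Hx0 ltac:(lra) (fun y Hy => proj1 (HP y ltac:(lra)))
      (fun y Hy => HP1 y ltac:(lra))).
    rewrite HP0 in Hincr. rewrite (Rabs_right x), Rabs_right by nra. nra.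
  - assert (Hincr := is_derive_within_increment_ge (-r) r P P1 x 0 (P1 0 / 2)
      ltac:(lra) ltac:(lra) ltac:(lra) (fun y Hy => proj1 (HP y ltac:(lra)))
      (fun y Hy => HP1 y ltac:(lra))).
    rewrite HP0 in Hincr. rewrite (Rabs_left x), Rabs_left1 by nra. nra.
Qed.

(** * The energy identity *)

(* [Cdot z w = Re (Cconj z * w)] and [Ccross z w = Im (Cconj z * w)]. *)
Definition Cdot (z w : C) : R := Re z * Re w + Im z * Im w.
Definition Ccross (z w : C) : R := Re z * Im w - Im z * Re w.

Lemma Cdot_Ccross_sqr z w : Cdot z w ^ 2 + Ccross z w ^ 2 = (Cmod z * Cmod w) ^ 2.
Proof. rewrite Rpow_mult_distr, !Cmod2_alt. unfold Cdot, Ccross. ring. Qed.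

Lemma Rabs_le_of_sqr_le a c : 0 <= c -> a ^ 2 <= c ^ 2 -> Rabs a <= c.
Proof.
  intros Hc H. rewrite <- (Rabs_pos_eq c Hc).
  apply (Rsqr_le_abs_0 a c). unfold Rsqr. lra.
Qed.

Lemma Rabs_Cdot_le z w : Rabs (Cdot z w) <= Cmod z * Cmod w.
Proof.
  apply Rabs_le_of_sqr_le; [apply Rmult_le_pos; apply Cmod_ge_0|]. rewrite <- Cdot_Ccross_sqr.
  generalize (pow2_ge_0 (Ccross z w)). lra.
Qed.

Lemma Rabs_Ccross_le z w : Rabs (Ccross z w) <= Cmod z * Cmod w.
Proof.
  apply Rabs_le_of_sqr_le; [apply Rmult_le_pos; apply Cmod_ge_0|]. rewrite <- Cdot_Ccross_sqr.
  generalize (pow2_ge_0 (Cdot z w)). lra.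
Qed.

Lemma Rabs_Re_le_Cmod z : Rabs (Re z) <= Cmod z.
Proof. exact (Rle_trans _ _ _ (Rmax_l _ _) (Rmax_Cmod z)). Qed.

Lemma Rabs_Im_le_Cmod z : Rabs (Im z) <= Cmod z.
Proof. exact (Rle_trans _ _ _ (Rmax_r _ _) (Rmax_Cmod z)). Qed.

Lemma is_derive_within_Cmod_sqr a b (g : R -> C) t l :
  has_deriv_within a b g t l ->
  is_derive_within a b (fun s => Cmod (g s) ^ 2) t (2 * Cdot (g t) l).
Proof.
  intros H. destruct (is_derive_within_components _ _ _ _ _ H) as [Hre Him].
  apply (is_derive_within_ext a b (fun s => Re (g s) * Re (g s) + Im (g s) * Im (g s))).
  { intros s. rewrite Cmod2_alt. ring. }
  replace (2 * Cdot (g t) l)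
    with (Re l * Re (g t) + Re (g t) * Re l + (Im l * Im (g t) + Im (g t) * Im l))
    by (unfold Cdot; ring).
  apply is_derive_within_plus; apply is_derive_within_mult; assumption.
Qed.

Lemma NL_energy_identity a1 b1 m1 f f1 f2 ft :
  (Ci * ft + NL a1 b1 m1 f f1 f2)%C = 0%C ->
  Cdot f ft = - (Cmod f ^ 2 * Ccross f f2 + 2 * b1 * Cdot f f1 * Ccross f f1
                 + Im m1 * (Cmod f ^ 2) ^ 2).
Proof.
  unfold NL, Cdot, Ccross. rewrite !Cmod2_alt.
  destruct f as [p q], f1 as [p1 q1], f2 as [p2 q2], ft as [u v], m1 as [m n].
  unfold Ci, Cmult, Cplus, Cconj, RtoC, Re, Im; simpl. intros H.
  injection H as H1 H2. nra.
Qed.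

Lemma NL_energy_bound a1 b1 m1 f f1 f2 ft M :
  (Ci * ft + NL a1 b1 m1 f f1 f2)%C = 0%C ->
  Cmod f <= M -> Cmod f1 <= M -> Cmod f2 <= M ->
  Rabs (2 * Cdot f ft) <=
    2 * (1 + Rabs (Im m1)) * M * Cmod f ^ 3
    + 4 * Rabs b1 * M * Cmod f * Rabs (Ccross f f1).
Proof.
  intros Heq Hf Hf1 Hf2. rewrite (NL_energy_identity _ _ _ _ _ _ _ Heq).
  assert (Hr := Cmod_ge_0 f). set (r := Cmod f) in *.
  assert (Hc := Rabs_pos (Ccross f f1)).
  assert (Hbm := Rabs_pos b1). assert (Hmm := Rabs_pos (Im m1)).
  assert (T1 : Rabs (r ^ 2 * Ccross f f2) <= M * r ^ 3).
  { rewrite Rabs_mult, Rabs_pos_eq by nra.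
    assert (H := Rabs_Ccross_le f f2). fold r in H.
    assert (H' : Rabs (Ccross f f2) <= r * M) by (apply (Rle_trans _ _ _ H); nra).
    apply (Rmult_le_compat_l (r ^ 2)) in H'; [nra | nra]. }
  assert (T2 : Rabs (2 * b1 * Cdot f f1 * Ccross f f1)
               <= 2 * Rabs b1 * (r * M) * Rabs (Ccross f f1)).
  { rewrite !Rabs_mult, (Rabs_pos_eq 2) by lra.
    assert (H := Rabs_Cdot_le f f1). fold r in H.
    apply Rmult_le_compat_r; [lra|]. apply Rmult_le_compat_l; nra. }
  assert (T3 : Rabs (Im m1 * (r ^ 2) ^ 2) <= Rabs (Im m1) * M * r ^ 3).
  { rewrite Rabs_mult, (Rabs_pos_eq ((r ^ 2) ^ 2)) by nra.
    rewrite Rmult_assoc. apply Rmult_le_compat_l; [lra|].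
    assert (0 <= r ^ 3) by (apply pow_le; lra). nra. }
  rewrite Rabs_mult, Rabs_Ropp, (Rabs_pos_eq 2) by lra.
  assert (T := Rabs_triang (r ^ 2 * Ccross f f2 + 2 * b1 * Cdot f f1 * Ccross f f1)
                           (Im m1 * (r ^ 2) ^ 2)).
  assert (T' := Rabs_triang (r ^ 2 * Ccross f f2) (2 * b1 * Cdot f f1 * Ccross f f1)).
  nra.
Qed.

(** * Estimates for solutions of ( * ) *)

Definition modulus_growth_rate (beta1 : R) (mu1 : C) : R :=
  1 + 2 * Rabs beta1 + Rabs (Im mu1).

Definition prop2p6_constant (beta1 : R) (mu1 : C) : R :=
  3 * modulus_growth_rate beta1 mu1 + 32 * Rabs beta1.

Lemma exp_le_compat a b : a <= b -> exp a <= exp b.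
Proof. intros [H | ->]; [left; apply exp_increasing, H | right; reflexivity]. Qed.

Lemma modulus_growth_rate_pos beta1 mu1 : 0 < modulus_growth_rate beta1 mu1.
Proof.
  unfold modulus_growth_rate. generalize (Rabs_pos beta1) (Rabs_pos (Im mu1)). lra.
Qed.

Lemma modulus_growth_rate_le_constant beta1 mu1 :
  3 * modulus_growth_rate beta1 mu1 <= prop2p6_constant beta1 mu1.
Proof. unfold prop2p6_constant. generalize (Rabs_pos beta1). lra. Qed.

Lemma growth_factor_bounds beta1 mu1 M t delta : 0 <= t <= delta ->
  1 <= exp (modulus_growth_rate beta1 mu1 * M ^ 2 * t) /\
  exp (modulus_growth_rate beta1 mu1 * M ^ 2 * t) ^ 3
    <= exp (prop2p6_constant beta1 mu1 * M ^ 2 * delta).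
Proof.
  intros Ht.
  assert (Hk := modulus_growth_rate_pos beta1 mu1).
  assert (HC := modulus_growth_rate_le_constant beta1 mu1).
  set (k := modulus_growth_rate beta1 mu1) in *.
  assert (HMt : 0 <= M ^ 2 * t) by (apply Rmult_le_pos; [apply pow2_ge_0 | lra]).
  assert (HMd : M ^ 2 * t <= M ^ 2 * delta)
    by (apply Rmult_le_compat_l; [apply pow2_ge_0 | lra]).
  split.
  - rewrite <- exp_0 at 1. apply exp_le_compat. nra.
  - replace (exp (k * M ^ 2 * t) ^ 3) with (exp (3 * k * M ^ 2 * t)).
    + apply exp_le_compat. nra.
    + replace (3 * k * M ^ 2 * t) with (k * M ^ 2 * t + (k * M ^ 2 * t + k * M ^ 2 * t))
        by ring.
      rewrite !exp_plus. ring.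
Qed.

Lemma prop2p6_constant_dominates beta1 mu1 u : 0 <= u ->
  2 * (1 + Rabs (Im mu1)) + 32 * Rabs beta1 * u ^ 2
    <= prop2p6_constant beta1 mu1 * (1 + u) ^ 3.
Proof.
  intros Hu. assert (1 <= (1 + u) ^ 3) by nra. assert (u ^ 2 <= (1 + u) ^ 3) by nra.
  generalize (Rabs_pos beta1) (Rabs_pos (Im mu1)).
  unfold prop2p6_constant, modulus_growth_rate. nra.
Qed.

Section Solution.

Variables (alpha1 beta1 : R) (mu1 : C) (x1 delta M : R) (f f1 f2 ft : R -> R -> C).

Hypothesis x1_pos : 0 < x1.
Hypothesis delta_ge0 : 0 <= delta.
Hypothesis f_deriv_x : forall t x, 0 <= t <= delta -> -x1 <= x <= x1 ->
  has_deriv_within (-x1) x1 (f t) x (f1 t x) /\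
  has_deriv_within (-x1) x1 (f1 t) x (f2 t x).
Hypothesis f_bound : forall t x, 0 <= t <= delta -> -x1 <= x <= x1 ->
  Cmod (f t x) <= M /\ Cmod (f1 t x) <= M /\ Cmod (f2 t x) <= M.
Hypothesis f_solves : forall t x, 0 <= t <= delta -> -x1 <= x <= x1 ->
  has_deriv_within 0 delta (fun s => f s x) t (ft t x) /\
  (Ci * ft t x + NL alpha1 beta1 mu1 (f t x) (f1 t x) (f2 t x))%C = 0%C.
Hypothesis f_zero : f 0 0 = 0%C.

Lemma bound_nonneg : 0 <= M.
Proof.
  destruct (f_bound 0 0) as [H _]; try lra.
  exact (Rle_trans _ _ _ (Cmod_ge_0 _) H).
Qed.

Lemma Cmod_sqr_time_derivative_bound t x : 0 <= t <= delta -> -x1 <= x <= x1 ->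
  Rabs (2 * Cdot (f t x) (ft t x)) <=
    2 * (1 + Rabs (Im mu1)) * M * Cmod (f t x) ^ 3
    + 4 * Rabs beta1 * M * Cmod (f t x) * Rabs (Ccross (f t x) (f1 t x)).
Proof.
  intros Ht Hx. destruct (f_bound t x Ht Hx) as [B0 [B1 B2]].
  exact (NL_energy_bound _ _ _ _ _ _ _ _ (proj2 (f_solves t x Ht Hx)) B0 B1 B2).
Qed.

Lemma Cmod_sqr_time_derivative_le t x : 0 <= t <= delta -> -x1 <= x <= x1 ->
  2 * Cdot (f t x) (ft t x)
    <= 2 * modulus_growth_rate beta1 mu1 * M ^ 2 * Cmod (f t x) ^ 2.
Proof.
  intros Ht Hx.
  assert (Hl := Cmod_sqr_time_derivative_bound t x Ht Hx).
  destruct (f_bound t x Ht Hx) as [B0 [B1 _]].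
  assert (Hr := Cmod_ge_0 (f t x)). set (r := Cmod (f t x)) in *.
  assert (HM := bound_nonneg).
  assert (Hb := Rabs_pos beta1). assert (Hm := Rabs_pos (Im mu1)).
  assert (Hc : Rabs (Ccross (f t x) (f1 t x)) <= r * M)
    by (apply (Rle_trans _ _ _ (Rabs_Ccross_le _ _)); fold r; nra).
  assert (Hr3 : 2 * (1 + Rabs (Im mu1)) * M * r ^ 3
                <= 2 * (1 + Rabs (Im mu1)) * M ^ 2 * r ^ 2).
  { assert (0 <= (1 + Rabs (Im mu1)) * M * r ^ 2)
      by (repeat apply Rmult_le_pos; nra).
    nra. }
  assert (Hrc : 4 * Rabs beta1 * M * r * Rabs (Ccross (f t x) (f1 t x))
                <= 4 * Rabs beta1 * M ^ 2 * r ^ 2).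
  { assert (0 <= Rabs beta1 * M * r) by (repeat apply Rmult_le_pos; nra).
    nra. }
  generalize (Rle_abs (2 * Cdot (f t x) (ft t x))).
  unfold modulus_growth_rate. nra.
Qed.

Lemma Cmod_growth t x : 0 <= t <= delta -> -x1 <= x <= x1 ->
  Cmod (f t x) <= Cmod (f 0 x) * exp (modulus_growth_rate beta1 mu1 * M ^ 2 * t).
Proof.
  intros Ht Hx.
  set (k := modulus_growth_rate beta1 mu1).
  assert (Hsqr : Cmod (f t x) ^ 2 <= Cmod (f 0 x) ^ 2 * exp (2 * k * M ^ 2 * t)).
  { apply (gronwall_exp delta (fun s => Cmod (f s x) ^ 2)
             (fun s => 2 * Cdot (f s x) (ft s x))); auto.
    - intros s Hs. apply (is_derive_within_Cmod_sqr 0 delta (fun s => f s x)), f_solves; auto.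
    - intros s Hs. apply Cmod_sqr_time_derivative_le; auto. }
  assert (Hexp : exp (2 * k * M ^ 2 * t) = exp (k * M ^ 2 * t) ^ 2).
  { replace (2 * k * M ^ 2 * t) with (k * M ^ 2 * t + k * M ^ 2 * t) by ring.
    rewrite exp_plus. ring. }
  rewrite Hexp, <- Rpow_mult_distr in Hsqr.
  rewrite <- (Rabs_pos_eq (Cmod (f t x))) by apply Cmod_ge_0.
  apply Rabs_le_of_sqr_le; [|exact Hsqr].
  apply Rmult_le_pos; [apply Cmod_ge_0 | apply Rlt_le, exp_pos].
Qed.

Lemma f_zero_persists t : 0 <= t <= delta -> f t 0 = 0%C.
Proof.
  intros Ht. apply Cmod_eq_0.
  assert (H := Cmod_growth t 0 Ht ltac:(lra)).
  rewrite f_zero, Cmod_0, Rmult_0_l in H.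
  generalize (Cmod_ge_0 (f t 0)). lra.
Qed.

Lemma f_components_deriv_x t y : 0 <= t <= delta -> -x1 <= y <= x1 ->
  (is_derive_within (-x1) x1 (fun y => Re (f t y)) y (Re (f1 t y)) /\
   is_derive_within (-x1) x1 (fun y => Re (f1 t y)) y (Re (f2 t y))) /\
  (is_derive_within (-x1) x1 (fun y => Im (f t y)) y (Im (f1 t y)) /\
   is_derive_within (-x1) x1 (fun y => Im (f1 t y)) y (Im (f2 t y))).
Proof.
  intros Ht Hy. destruct (f_deriv_x t y Ht Hy) as [D1 D2].
  destruct (is_derive_within_components _ _ _ _ _ D1).
  destruct (is_derive_within_components _ _ _ _ _ D2).
  tauto.
Qed.

Lemma Ccross_bound_near_zero t x : 0 <= t <= delta -> -x1 <= x <= x1 ->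
  Rabs (Ccross (f t x) (f1 t x)) <= 2 * M ^ 2 * x ^ 2.
Proof.
  intros Ht Hx.
  assert (Hf0 := f_zero_persists t Ht).
  assert (HRe : Rabs (Re (f t x) - Re (f t 0) - (x - 0) * Re (f1 t x)) <= M * (x - 0) ^ 2).
  { apply (Taylor_first_order_remainder (-x1) x1 (fun y => Re (f t y))
             (fun y => Re (f1 t y)) (fun y => Re (f2 t y))); try lra.
    - intros y Hy. apply (f_components_deriv_x t y Ht Hy).
    - intros y Hy. eapply Rle_trans; [apply Rabs_Re_le_Cmod | apply (f_bound t y Ht Hy)]. }
  assert (HIm : Rabs (Im (f t x) - Im (f t 0) - (x - 0) * Im (f1 t x)) <= M * (x - 0) ^ 2).
  { apply (Taylor_first_order_remainder (-x1) x1 (fun y => Im (f t y))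
             (fun y => Im (f1 t y)) (fun y => Im (f2 t y))); try lra.
    - intros y Hy. apply (f_components_deriv_x t y Ht Hy).
    - intros y Hy. eapply Rle_trans; [apply Rabs_Im_le_Cmod | apply (f_bound t y Ht Hy)]. }
  rewrite Hf0, Rminus_0_r in HRe, HIm. simpl in HRe, HIm. rewrite Rminus_0_r in HRe, HIm.
  destruct (f_bound t x Ht Hx) as [_ [B1 _]].
  assert (HRe1 := Rle_trans _ _ _ (Rabs_Re_le_Cmod (f1 t x)) B1).
  assert (HIm1 := Rle_trans _ _ _ (Rabs_Im_le_Cmod (f1 t x)) B1).
  replace (Ccross (f t x) (f1 t x)) with
    ((Re (f t x) - x * Re (f1 t x)) * Im (f1 t x)
     - (Im (f t x) - x * Im (f1 t x)) * Re (f1 t x)) by (unfold Ccross; ring).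
  eapply Rle_trans; [apply Rabs_triang|]. rewrite Rabs_Ropp, !Rabs_mult.
  assert (0 <= M * x ^ 2) by (apply Rmult_le_pos; [apply bound_nonneg | apply pow2_ge_0]).
  generalize (Rabs_pos (Re (f t x) - x * Re (f1 t x))) (Rabs_pos (Im (f t x) - x * Im (f1 t x)))
    (Rabs_pos (Re (f1 t x))) (Rabs_pos (Im (f1 t x))).
  intros. nra.
Qed.

Section Nondegenerate_zero.

Variable S : R.
Hypothesis f2_initial_bound : forall y, -x1 <= y <= x1 -> Cmod (f2 0 y) <= S.
Hypothesis f2_initial_small : S * x1 < Re (f1 0 0) / 2.

Lemma initial_slope_pos : 0 < Re (f1 0 0).
Proof.
  assert (0 <= S) by (eapply Rle_trans; [apply Cmod_ge_0 | apply (f2_initial_bound 0); lra]).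
  assert (0 <= S * x1) by (apply Rmult_le_pos; lra). lra.
Qed.

Lemma Cmod_initial_lower_bound x : -x1 <= x <= x1 ->
  Re (f1 0 0) * Rabs x / 2 <= Cmod (f 0 x).
Proof.
  intros Hx. eapply Rle_trans; [| apply Rabs_Re_le_Cmod].
  apply (lower_bound_near_simple_zero x1 (fun y => Re (f 0 y)) (fun y => Re (f1 0 y))
           (fun y => Re (f2 0 y)) S); auto.
  - intros y Hy. apply (f_components_deriv_x 0 y ltac:(lra) Hy).
  - intros y Hy. eapply Rle_trans; [apply Rabs_Re_le_Cmod | auto].
  - simpl. rewrite f_zero. reflexivity.
Qed.

Lemma Ccross_bound_by_initial_modulus t x : 0 <= t <= delta -> -x1 <= x <= x1 ->
  Rabs (Ccross (f t x) (f1 t x)) <= 8 * (/ Re (f1 0 0) * M) ^ 2 * Cmod (f 0 x) ^ 2.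
Proof.
  intros Ht Hx.
  set (a := Re (f1 0 0)) in *. set (u := / a * M).
  assert (Ha := initial_slope_pos). fold a in Ha.
  assert (Hlow := Cmod_initial_lower_bound x Hx). fold a in Hlow.
  assert (Hax : a ^ 2 * x ^ 2 <= 4 * Cmod (f 0 x) ^ 2).
  { rewrite <- (pow2_abs x), <- Rpow_mult_distr.
    replace (4 * Cmod (f 0 x) ^ 2) with ((2 * Cmod (f 0 x)) ^ 2) by ring.
    apply pow_incr. split; [apply Rmult_le_pos; [lra | apply Rabs_pos] | lra]. }
  eapply Rle_trans; [apply (Ccross_bound_near_zero t x Ht Hx)|].
  replace (2 * M ^ 2 * x ^ 2) with (2 * u ^ 2 * (a ^ 2 * x ^ 2)) by (unfold u; field; lra).
  generalize (pow2_ge_0 u). nra.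
Qed.

Lemma Cmod_sqr_time_derivative_bound_initial t x : 0 <= t <= delta -> -x1 <= x <= x1 ->
  Rabs (2 * Cdot (f t x) (ft t x)) <=
    (2 * (1 + Rabs (Im mu1)) + 32 * Rabs beta1 * (/ Re (f1 0 0) * M) ^ 2)
    * (M * (Cmod (f 0 x) ^ 3 * exp (prop2p6_constant beta1 mu1 * M ^ 2 * delta))).
Proof.
  intros Ht Hx.
  assert (Hl := Cmod_sqr_time_derivative_bound t x Ht Hx).
  assert (Hr := Cmod_growth t x Ht Hx).
  assert (HZ := Ccross_bound_by_initial_modulus t x Ht Hx).
  destruct (growth_factor_bounds beta1 mu1 M t delta Ht) as [He1 He3].
  set (e := exp (modulus_growth_rate beta1 mu1 * M ^ 2 * t)) in *.
  set (E := exp (prop2p6_constant beta1 mu1 * M ^ 2 * delta)) in *.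
  set (u := / Re (f1 0 0) * M) in *.
  set (r := Cmod (f t x)) in *. set (r0 := Cmod (f 0 x)) in *.
  set (Z := Rabs (Ccross (f t x) (f1 t x))) in *.
  assert (HM := bound_nonneg).
  assert (Hr0 : 0 <= r0) by apply Cmod_ge_0. assert (Hrp : 0 <= r) by apply Cmod_ge_0.
  assert (HZp : 0 <= Z) by apply Rabs_pos.
  assert (Hb := Rabs_pos beta1). assert (Hm := Rabs_pos (Im mu1)).
  assert (Hr3 : r ^ 3 <= r0 ^ 3 * E).
  { apply Rle_trans with ((r0 * e) ^ 3); [apply pow_incr; lra|].
    rewrite Rpow_mult_distr. apply Rmult_le_compat_l; [apply pow_le; lra | exact He3]. }
  assert (HrZ : r * Z <= 8 * u ^ 2 * (r0 ^ 3 * E)).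
  { assert (He : e <= E) by nra.
    apply Rle_trans with ((r0 * e) * (8 * u ^ 2 * r0 ^ 2)).
    - apply Rmult_le_compat; lra.
    - assert (0 <= 8 * u ^ 2 * r0 ^ 3) by (generalize (pow2_ge_0 u) (pow_le r0 3 Hr0); nra).
      nra. }
  assert (T1 : 2 * (1 + Rabs (Im mu1)) * M * r ^ 3
               <= 2 * (1 + Rabs (Im mu1)) * (M * (r0 ^ 3 * E))).
  { rewrite Rmult_assoc. apply Rmult_le_compat_l; [lra|]. apply Rmult_le_compat_l; lra. }
  assert (T2 : 4 * Rabs beta1 * M * r * Z <= 32 * Rabs beta1 * u ^ 2 * (M * (r0 ^ 3 * E))).
  { replace (4 * Rabs beta1 * M * r * Z) with (4 * Rabs beta1 * M * (r * Z)) by ring.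
    replace (32 * Rabs beta1 * u ^ 2 * (M * (r0 ^ 3 * E)))
      with (4 * Rabs beta1 * M * (8 * u ^ 2 * (r0 ^ 3 * E))) by ring.
    apply Rmult_le_compat_l; [nra | exact HrZ]. }
  lra.
Qed.

Lemma Cmod_sqr_time_derivative_estimate t x : 0 <= t <= delta -> -x1 <= x <= x1 ->
  exists l : R,
    has_deriv_within 0 delta (fun s => Cmod (f s x) ^ 2) t l /\
    Rabs l <= prop2p6_constant beta1 mu1 * M
              * exp (prop2p6_constant beta1 mu1 * M ^ 2 * delta)
              * (1 + / Re (f1 0 0) * M) ^ 3 * Cmod (f 0 x) ^ 3.
Proof.
  intros Ht Hx. exists (2 * Cdot (f t x) (ft t x)). split.
  { apply has_deriv_within_of_is_derive_within,
      (is_derive_within_Cmod_sqr 0 delta (fun s => f s x)), f_solves; auto. }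
  eapply Rle_trans; [apply (Cmod_sqr_time_derivative_bound_initial t x Ht Hx)|].
  assert (Hu : 0 <= / Re (f1 0 0) * M) by (apply Rmult_le_pos;
    [apply Rlt_le, Rinv_0_lt_compat, initial_slope_pos | apply bound_nonneg]).
  assert (HP : 0 <= M * (Cmod (f 0 x) ^ 3 * exp (prop2p6_constant beta1 mu1 * M ^ 2 * delta)))
    by (apply Rmult_le_pos; [apply bound_nonneg | apply Rmult_le_pos;
          [apply pow_le, Cmod_ge_0 | apply Rlt_le, exp_pos]]).
  eapply Rle_trans;
    [apply Rmult_le_compat_r; [exact HP | exact (prop2p6_constant_dominates beta1 mu1 _ Hu)]|].
  right. ring.
Qed.

End Nondegenerate_zero.

End Solution.

(* f t x = f(t,x); f1, f2, f3 = d_x f, d_x^2 f, d_x^3 f; ft = d_t f. *)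
Theorem proposition2p6 (alpha1 beta1 : R) (mu1 : C) :
  exists C0 : R, 0 < C0 /\
  forall (x1 delta : R) (f f1 f2 f3 ft : R -> R -> C) (M : R),
    0 < x1 -> x1 < 1 -> 0 < delta ->
    (* f(t,.) in C^{3,1}([-x1,x1]) for each t in [0,delta] *)
    (forall t x, 0 <= t <= delta -> -x1 <= x <= x1 ->
       has_deriv_within (-x1) x1 (f t) x (f1 t x) /\
       has_deriv_within (-x1) x1 (f1 t) x (f2 t x) /\
       has_deriv_within (-x1) x1 (f2 t) x (f3 t x)) ->
    (* M bounds the L^infty([0,delta]; C^{3,1}) norm of f *)
    (forall t x y, 0 <= t <= delta -> -x1 <= x <= x1 -> -x1 <= y <= x1 ->
       Cmod (f t x) <= M /\ Cmod (f1 t x) <= M /\ Cmod (f2 t x) <= M /\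
       Cmod (f3 t x) <= M /\ Cmod (minus (f3 t x) (f3 t y)) <= M * Rabs (x - y)) ->
    (* f solves ( * ) *)
    (forall t x, 0 <= t <= delta -> -x1 <= x <= x1 ->
       has_deriv_within 0 delta (fun s => f s x) t (ft t x) /\
       (Ci * ft t x + NL alpha1 beta1 mu1 (f t x) (f1 t x) (f2 t x))%C = 0%C) ->
    f 0 0 = 0%C ->
    Im (f1 0 0) = 0 -> 0 < Re (f1 0 0) ->
    (exists S, (forall x, -x1 <= x <= x1 -> Cmod (f2 0 x) <= S) /\
               S * x1 < Re (f1 0 0) / 2) ->
    forall t x, 0 <= t <= delta -> -x1 <= x <= x1 ->
      Cmod (f t x) <= Cmod (f 0 x) * exp (C0 * M ^ 2 * t) /\
      exists l : R,
        has_deriv_within 0 delta (fun s => Cmod (f s x) ^ 2) t l /\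
        Rabs l <= C0 * M * exp (C0 * M ^ 2 * delta)
                  * (1 + / Re (f1 0 0) * M) ^ 3
                  * (Cmod (f 0 x) ^ 3 + t * M ^ 3 * Cmod (f 0 x) ^ 2).
Proof.
  assert (Hk := modulus_growth_rate_pos beta1 mu1).
  assert (HC := modulus_growth_rate_le_constant beta1 mu1).
  exists (prop2p6_constant beta1 mu1). split; [lra|].
  intros x1 delta f f1 f2 f3 ft M Hx1 _ Hdelta Hderiv Hbound Hsol Hzero _ Hslope
    [S [HS Hsmall]] t x Ht Hx.
  assert (Hderiv_x : forall t x, 0 <= t <= delta -> -x1 <= x <= x1 ->
    has_deriv_within (-x1) x1 (f t) x (f1 t x) /\
    has_deriv_within (-x1) x1 (f1 t) x (f2 t x))
    by (intros s y Hs Hy; destruct (Hderiv s y Hs Hy) as (? & ? & _); auto).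
  assert (Hbound' : forall t x, 0 <= t <= delta -> -x1 <= x <= x1 ->
    Cmod (f t x) <= M /\ Cmod (f1 t x) <= M /\ Cmod (f2 t x) <= M)
    by (intros s y Hs Hy; destruct (Hbound s y y Hs Hy Hy) as (? & ? & ? & _); auto).
  assert (Hdelta' : 0 <= delta) by lra.
  assert (HM := bound_nonneg x1 delta M f f1 f2 Hx1 Hdelta' Hbound').
  split.
  - eapply Rle_trans;
      [exact (Cmod_growth _ _ _ _ _ _ _ _ _ _ Hx1 Hdelta' Hbound' Hsol t x Ht Hx) |].
    apply Rmult_le_compat_l; [apply Cmod_ge_0 | apply exp_le_compat].
    apply Rmult_le_compat_r; [lra|]. apply Rmult_le_compat_r; [apply pow2_ge_0 | lra].
  - destruct (Cmod_sqr_time_derivative_estimate _ _ _ _ _ _ _ _ _ _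
      Hx1 Hdelta' Hderiv_x Hbound' Hsol Hzero S HS Hsmall t x Ht Hx) as [l [Hl Hlb]].
    exists l. split; [exact Hl|].
    eapply Rle_trans; [exact Hlb|].
    apply Rmult_le_compat_l.
    + assert (0 <= 1 + / Re (f1 0 0) * M)
        by (assert (0 < / Re (f1 0 0)) by (apply Rinv_0_lt_compat; lra); nra).
      repeat apply Rmult_le_pos; auto using pow_le, Rlt_le, exp_pos; lra.
    + assert (0 <= t * M ^ 3 * Cmod (f 0 x) ^ 2)
        by (repeat apply Rmult_le_pos; auto using pow_le, Cmod_ge_0; lra).
      lra.
Qed.
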